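(* Let $(g,f)$ be a Riordan matrix with $A$-sequence $(a_j)_{j\ge0}$, $A(t)=\sum_{j\ge0}a_jt^j$. Let $c_j=[t^j]\,1/A(t)$ for $j\ge0$, and put $\tilde c_0=\tilde c_1=0$ and $\tilde c_j=c_{j-2}$ for $j\ge2$. Then a sequence $(b_j)_{j\ge0}$ is a type-I $B$-sequence of $(g,f)$ if and only if $a_0=1$, $a_2=0$, for every $\ell\ge0$ $$b_\ell=a_{2\ell+1}-\sum_{\mathbf i=(i_1,\dots,i_k)\in\mathcal D_{2\ell,\ell-1}} b_k\,\tilde c_{i_1}\tilde c_{i_2}\cdots\tilde c_{i_k},$$ and for every $\ell\ge2$ $$a_{2\ell}=\sum_{\mathbf i=(i_1,\dots,i_k)\in\mathcal D_{2\ell-1,\ell-1}} b_k\,\tilde c_{i_1}\tilde c_{i_2}\cdots\tilde c_{i_k}.$$ (The right-hand side of the formula for $b_\ell$ involves only $b_k$ with $k\le\ell-1$, so the $b_\ell$ are determined recursively from the $a_j$, with $a_{2\ell+1}$ arbitrary; e.g. $b_0=a_1$, $b_1=a_3$, $a_4=-a_1a_3$, $b_2=a_5-b_1(a_1^2-a_2)$.)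
   Context: Let $K$ be $\mathbb{R}$ or $\mathbb{C}$. A (proper) Riordan matrix is a pair $(g,f)$ of formal power series in $K[[t]]$ with $g(0)=1$, $f(0)=0$, $f'(0)\neq 0$, identified with the infinite lower triangular matrix $(d_{n,k})_{n,k\ge0}$, $d_{n,k}=[t^n]g(t)f(t)^k$; we set $d_{n,k}=0$ if $n<0$, $k<0$ or $k>n$. The $A$-sequence $(a_j)_{j\ge0}$ is the unique sequence whose generating function $A(t)$ satisfies $f(t)=tA(f(t))$ (so $a_0\neq0$). A type-I $B$-sequence of $(g,f)$ is a sequence $(b_j)_{j\ge0}$ such that $d_{n+1,k}=d_{n,k-1}+\sum_{j\ge0}b_j d_{n-j,k+j}$ for all $n\ge0$ and $k\ge1$. For integers $n\ge1$ and $m\ge1$, $\mathcal D_{n,m}$ denotes the set of compositions of $n$ into at most $m$ parts, i.e. tuples $(i_1,\dots,i_k)$ of positive integers with $1\le k\le m$ and $i_1+\cdots+i_k=n$; $k$ is the length of the tuple. By convention $\mathcal D_{0,-1}=\mathcal D_{2,0}=\emptyset$ (empty sums are $0$). *)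

From mathcomp Require Import all_boot all_order all_algebra.
Set Implicit Arguments. Unset Strict Implicit. Unset Printing Implicit Defensive.
Import Order.TTheory GRing.Theory Num.Theory.
Local Open Scope ring_scope.

(* Formal power series over K represented by their coefficient sequences
   nat -> K  (s n = [t^n] s). *)
Section FPS.
Variable K : fieldType.

Definition smul (s u : nat -> K) : nat -> K :=
  fun n => \sum_(i < n.+1) s i * u (n - i)%N.

Definition sone : nat -> K := fun n => (n == 0%N)%:R.

Fixpoint spow (s : nat -> K) (k : nat) : nat -> K :=
  match k with 0%N => sone | k'.+1 => smul s (spow s k') end.

Definition rentry (g f : nat -> K) (n k : nat) : K :=
  if (k <= n)%N then smul g (spow f k) n else 0.

Definition riordan (g f : nat -> K) : Prop :=
  g 0%N = 1 /\ f 0%N = 0 /\ f 1%N != 0.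

(* [t^m] A(f(t)) = sum_j a_j [t^m] f^j  (finite since f(0) = 0) *)
Definition scomp (a f : nat -> K) : nat -> K :=
  fun m => \sum_(j < m.+1) a j * spow f j m.

(* a is the A-sequence of f :  f(t) = t A(f(t)) *)
Definition is_Aseq (f a : nat -> K) : Prop :=
  forall n, f n = if n is n'.+1 then scomp a f n' else 0.

Definition is_recip (a c : nat -> K) : Prop :=
  forall n, smul a c n = sone n.

(* type-I B-sequence: d_{n+1,k} = d_{n,k-1} + sum_{j>=0} b_j d_{n-j,k+j},
   n >= 0, k >= 1; terms with j > n vanish since n - j < 0. *)
Definition is_typeI_B (g f b : nat -> K) : Prop :=
  forall n k, (1 <= k)%N ->
    rentry g f n.+1 k =
    rentry g f n k.-1 + \sum_(j < n.+1) b j * rentry g f (n - j)%N (k + j)%N.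

Definition cshift (c : nat -> K) : nat -> K :=
  fun j => if (2 <= j)%N then c (j - 2)%N else 0.

(* sum over compositions (i_1,...,i_k) of n into at most m parts
   (1 <= k <= m) of  w_k * ct_{i_1} ... ct_{i_k}.  Each part lies in
   {1..n}, hence is encoded in 'I_n.+1. *)
Definition compsum (w ct : nat -> K) (n m : nat) : K :=
  \sum_(1 <= k < m.+1)
     \sum_(s : {ffun 'I_k -> 'I_n.+1} |
             [forall i, (0 < s i)%N] && ((\sum_(i < k) (s i : nat))%N == n))
        w k * \prod_(i < k) ct (s i : nat).

End FPS.

From mathcomp Require Import all_boot all_algebra.
From mathcomp Require Import zify ring.
Import GRing.Theory.
Set Implicit Arguments. Unset Strict Implicit. Unset Printing Implicit Defensive.
Local Open Scope ring_scope.

(** Write d_{n,k} = [t^n] g f^k. The right-hand side of the type-I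
   recurrence is d_{n,k-1} + sum_j b_j d_{n-j,k+j}
   = [t^{n+1}] g f^{k-1} (t + sum_j b_j (t f)^{j+1}); taking k = 1 and
   cancelling g (g(0) = 1), b is a type-I B-sequence iff
   f = t + sum_j b_j (t f)^{j+1}, which conversely gives every k.
   From f = t A(f) and A C = 1 we get f C(f) = t, hence f^2 C(f) = t f, and
   the equation becomes t (A - 1 - t B(t^2 C))(f) = 0 with B(t) = sum_j b_j t^j.
   As f is invertible for composition, this says A = 1 + t B(t^2 C).
   Finally [t^m] (t^2 C)^k is the sum over compositions of m into k parts of
   the products of the shifted c's: it vanishes for m < 2k and equals
   c_0^k = 1 for m = 2k, so the coefficients of t^{2l+1} and t^{2l} of A give
   the two formulas. Power series are handled through their truncations: every
   identity is a congruence of polynomials modulo t^N, for all N. *)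

Section TruncatedPolynomials.
Variable R : idomainType.
Implicit Types (p q r d A C F G P : {poly R}) (N : nat).

Definition eqmodX N p q := forall i, (i < N)%N -> p`_i = q`_i.

Lemma eqmodX_refl N p : eqmodX N p p.
Proof. by []. Qed.

Lemma eqmodX_sym N p q : eqmodX N p q -> eqmodX N q p.
Proof. by move=> h i /h ->. Qed.

Lemma eqmodX_trans N p q r : eqmodX N p q -> eqmodX N q r -> eqmodX N p r.
Proof. by move=> h1 h2 i hi; rewrite h1 // h2. Qed.

Lemma eqmodX_transl N p q r : eqmodX N p q -> eqmodX N p r <-> eqmodX N q r.
Proof.
move=> h; split=> h'; first exact: eqmodX_trans (eqmodX_sym h) h'.
exact: eqmodX_trans h h'.
Qed.

Lemma eqmodX_sub0 N p q : eqmodX N (p - q) 0 <-> eqmodX N p q.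
Proof.
split=> h i /h; rewrite coefB coef0; last by move->; rewrite subrr.
by move/eqP; rewrite subr_eq0 => /eqP.
Qed.

Lemma eqmodXB N p q p' q' :
  eqmodX N p p' -> eqmodX N q q' -> eqmodX N (p - q) (p' - q').
Proof. by move=> hp hq i hi; rewrite !coefB hp ?hq. Qed.

Lemma eqmodXZ N (a : R) p q : eqmodX N p q -> eqmodX N (a *: p) (a *: q).
Proof. by move=> h i hi; rewrite !coefZ h. Qed.

Lemma eqmodXM N p q p' q' :
  eqmodX N p p' -> eqmodX N q q' -> eqmodX N (p * q) (p' * q').
Proof.
move=> hp hq i hi; rewrite !coefM; apply: eq_bigr => j _.
by rewrite hp ?hq //; have := ltn_ord j; lia.
Qed.

Lemma eqmodX_exp N p q k : eqmodX N p q -> eqmodX N (p ^+ k) (q ^+ k).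
Proof.
move=> h; elim: k => [|k IH]; first exact: eqmodX_refl.
by rewrite !exprS; apply: eqmodXM.
Qed.

Lemma eqmodX_sum N n (u v : 'I_n -> {poly R}) :
  (forall i, eqmodX N (u i) (v i)) ->
  eqmodX N (\sum_(i < n) u i) (\sum_(i < n) v i).
Proof. by move=> h j hj; rewrite !coef_sum; apply: eq_bigr => i _; rewrite h. Qed.

Lemma coef0_exp p k : (p ^+ k)`_0 = p`_0 ^+ k.
Proof. by rewrite -!horner_coef0 horner_exp. Qed.

Lemma expr_drop1 F k : F`_0 = 0 -> F ^+ k = drop_poly 1 F ^+ k * 'X^k.
Proof.
move=> F0; rewrite -exprMn; congr (_ ^+ _).
rewrite -[LHS](poly_take_drop 1) (_ : take_poly 1 F = 0) ?add0r //.
by apply/polyP => -[|i]; rewrite coef_take_poly coef0.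
Qed.

Lemma coef_exp_lt F k m : F`_0 = 0 -> (m < k)%N -> (F ^+ k)`_m = 0.
Proof. by move=> F0 mk; rewrite expr_drop1 // coefMXn mk. Qed.

Lemma coef_exp_diag F k : F`_0 = 0 -> (F ^+ k)`_k = F`_1 ^+ k.
Proof.
by move=> F0; rewrite expr_drop1 // coefMXn ltnn subnn coef0_exp coef_drop_poly.
Qed.

Lemma sum_ord_single n i (u : nat -> R) : (forall j, j != i -> u j = 0) ->
  \sum_(j < n) u j = if (i < n)%N then u i else 0.
Proof.
move=> u0; rewrite -(big_ord1_eq +%R u) [RHS]big_mkcond; apply: eq_bigr => j _.
by case: eqP => [-> | /eqP /u0].
Qed.

Lemma coef_mul_lowest G d i :
  (forall j, (j < i)%N -> d`_j = 0) -> (G * d)`_i = G`_0 * d`_i.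
Proof.
move=> d0; rewrite coefM big_ord_recl subn0 big1 ?addr0 // => j _.
by rewrite lift0 d0 ?mulr0 //; have := ltn_ord j; lia.
Qed.

Lemma coef_comp_poly_lowest d F i : F`_0 = 0 ->
  (forall j, (j < i)%N -> d`_j = 0) -> (d \Po F)`_i = d`_i * F`_1 ^+ i.
Proof.
move=> F0 d0; rewrite coef_comp_poly.
rewrite (@sum_ord_single _ i (fun j => d`_j * (F ^+ j)`_i)) => [|j].
  by rewrite coef_exp_diag //; case: ltnP => // hi; rewrite nth_default ?mul0r.
case: ltngtP => // ji _; first by rewrite d0 ?mul0r.
by rewrite coef_exp_lt ?mulr0.
Qed.

Lemma eqmodX_mul2l N G p q :
  G`_0 != 0 -> eqmodX N (G * p) (G * q) <-> eqmodX N p q.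
Proof.
move=> G0; split=> [|h]; last exact: eqmodXM.
move/eqmodX_sub0; rewrite -mulrBr => h; apply/eqmodX_sub0.
elim/ltn_ind => i IH hi; have := h i hi.
rewrite coef_mul_lowest => [|j ji]; last by rewrite IH ?coef0 // (ltn_trans ji).
by rewrite !coef0 => /eqP; rewrite mulf_eq0 (negbTE G0) => /eqP.
Qed.

Lemma eqmodX_mulX N p q : eqmodX N ('X * p) ('X * q) <-> eqmodX N.-1 p q.
Proof.
split=> h i hi; first by have := h i.+1; rewrite !coefXM /=; apply; lia.
by rewrite !coefXM; case: i hi => //= i hi; apply: h; lia.
Qed.

Lemma eqmodX_comp N F p q :
  F`_0 = 0 -> eqmodX N p q -> eqmodX N (p \Po F) (q \Po F).
Proof.
move=> F0 /eqmodX_sub0 h; apply/eqmodX_sub0; rewrite -comp_polyB => m hm.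
rewrite coef_comp_poly coef0 big1 // => i _.
case: (ltnP i N) => hi; first by rewrite h // coef0 mul0r.
by rewrite coef_exp_lt ?mulr0 //; lia.
Qed.

Lemma eqmodX_comp2r N F p q : F`_0 = 0 -> F`_1 != 0 ->
  eqmodX N (p \Po F) (q \Po F) <-> eqmodX N p q.
Proof.
move=> F0 F1; split=> [|]; last exact: eqmodX_comp.
move/eqmodX_sub0; rewrite -comp_polyB => h; apply/eqmodX_sub0.
elim/ltn_ind => i IH hi; have := h i hi.
rewrite coef_comp_poly_lowest // => [|j ji]; last first.
  by rewrite IH ?coef0 // (ltn_trans ji).
rewrite !coef0 => /eqP; rewrite mulf_eq0 expf_eq0 (negbTE F1) andbF orbF.
by move/eqP.
Qed.

Lemma coef_exp_compositions P (w : nat -> R) n k :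
  P`_0 = 0 -> (forall j, (0 < j <= n)%N -> P`_j = w j) ->
  (P ^+ k)`_n =
  \sum_(s : {ffun 'I_k -> 'I_n.+1} |
          [forall i, (0 < s i)%N] && ((\sum_(i < k) (s i : nat))%N == n))
     \prod_(i < k) w (s i).
Proof.
move=> P0 hP; pose v j := if (0 < j)%N then w j else 0.
have hPv : eqmodX n.+1 P (\poly_(j < n.+1) v j).
  by move=> [|j] hj; rewrite coef_poly hj // /v /= hP.
rewrite (eqmodX_exp k hPv) // -{1}[k]card_ord -prodr_const poly_def.
rewrite bigA_distr_bigA coef_sum [RHS]big_mkcond; apply: eq_bigr => s _ /=.
rewrite scaler_prod prodrXr coefZ coefXn; case: eqP => [<- | ns]; last first.
  by rewrite mulr0; case: andP => // -[_ /eqP/esym].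
rewrite eqxx andbT mulr1.
case: (boolP [forall i, _]) => [/forallP pos | /forallPn [i /negbTE si0]].
  by apply: eq_bigr => i _; rewrite /v pos.
by rewrite (bigD1 i) //= /v si0 mul0r.
Qed.

Definition Bfun N (b : nat -> R) F := 'X + \sum_(j < N) b j *: ('X * F) ^+ j.+1.

Definition Bcomp N (b : nat -> R) C := \sum_(k < N) b k *: ('X^2 * C) ^+ k.

Lemma coef0_Bfun N b F : (Bfun N b F)`_0 = 0.
Proof.
rewrite coefD coefX add0r coef_sum big1 // => j _.
by rewrite coefZ coef0_exp coef0M coefX mul0r expr0n mulr0.
Qed.

Lemma Bfun_sub_comp N b A C F :
  F`_0 = 0 -> eqmodX N F ('X * (A \Po F)) -> eqmodX N (A * C) 1 ->
  eqmodX N (F - Bfun N b F) ('X * ((A - (1 + 'X * Bcomp N b C)) \Po F)).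
Proof.
move=> F0 hFA hAC.
have hFC : eqmodX N (F * (C \Po F)) 'X.
  apply: eqmodX_trans (eqmodXM hFA (eqmodX_refl _)) _.
  have := eqmodXM (eqmodX_refl 'X) (eqmodX_comp F0 hAC).
  by rewrite -mulrA -comp_polyM -polyC1 comp_polyC polyC1 mulr1.
rewrite /Bfun /Bcomp comp_polyB comp_polyD -polyC1 comp_polyC polyC1.
rewrite comp_polyM comp_polyX rmorph_sum /= mulrBr mulrDr mulr1 !mulr_sumr.
rewrite !opprD !addrA; apply: eqmodXB.
  exact: eqmodXB hFA (eqmodX_refl _).
apply: eqmodX_sum => k; rewrite comp_polyZ -!scalerAr; apply: eqmodXZ.
rewrite rmorphXn /= comp_polyM comp_Xn_poly exprS expr2 mulrA -(mulrA F F).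
apply: eqmodXM (eqmodX_refl _) _; rewrite (mulrC 'X).
apply: eqmodX_exp; apply: eqmodX_sym; exact: eqmodXM (eqmodX_refl _) hFC.
Qed.

Lemma Bfun_fixed_iff N b A C F :
  F`_0 = 0 -> F`_1 != 0 -> eqmodX N F ('X * (A \Po F)) -> eqmodX N (A * C) 1 ->
  eqmodX N F (Bfun N b F) <-> eqmodX N.-1 A (1 + 'X * Bcomp N b C).
Proof.
move=> F0 F1 hFA hAC.
rewrite -eqmodX_sub0 (eqmodX_transl _ (Bfun_sub_comp b F0 hFA hAC)).
by rewrite -(mulr0 'X) -(comp_poly0 F) eqmodX_mulX eqmodX_comp2r // eqmodX_sub0.
Qed.

Lemma coef_XsqC_exp C k m :
  (('X^2 * C) ^+ k)`_m = if (m < 2 * k)%N then 0 else (C ^+ k)`_(m - 2 * k).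
Proof. by rewrite exprMn -exprM coefXnM. Qed.

Lemma coef_Bcomp N M b C j : (M <= N)%N -> (j < 2 * M)%N ->
  (Bcomp N b C)`_j = \sum_(k < M) b k * (('X^2 * C) ^+ k)`_j.
Proof.
move=> MN jM; rewrite coef_sum.
rewrite (big_ord_widen N (fun k => b k * (('X^2 * C) ^+ k)`_j)) // [RHS]big_mkcond.
apply: eq_bigr => k _; rewrite coefZ; case: ifP => // /negbT kM.
by rewrite coef_XsqC_exp ifT ?mulr0 //; lia.
Qed.

End TruncatedPolynomials.

Section RiordanTypeIB.
Variable K : fieldType.
Implicit Types (a b c f g s u w ct : nat -> K) (N : nat).

Definition tpoly N s : {poly K} := \poly_(i < N) s i.

Lemma coef_tpoly N s i : (i < N)%N -> (tpoly N s)`_i = s i.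
Proof. by move=> hi; rewrite coef_poly hi. Qed.

Lemma coef0_tpoly N s : s 0%N = 0 -> (tpoly N s)`_0 = 0.
Proof. by move=> s0; rewrite coef_poly s0 if_same. Qed.

Lemma tpolyM N s u : eqmodX N (tpoly N s * tpoly N u) (tpoly N (smul s u)).
Proof.
move=> n hn; rewrite coef_tpoly // coefM; apply: eq_bigr => i _.
by rewrite !coef_tpoly //; have := ltn_ord i; lia.
Qed.

Lemma tpoly_spow N s k : eqmodX N (tpoly N s ^+ k) (tpoly N (spow s k)).
Proof.
elim: k => [|k IH]; first by move=> i hi; rewrite expr0 coef_tpoly // coef1.
by rewrite exprS; apply: eqmodX_trans (eqmodXM (eqmodX_refl _) IH) (tpolyM _ _).
Qed.

Lemma rentryE N g f n k : f 0%N = 0 -> (n < N)%N ->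
  rentry g f n k = (tpoly N g * tpoly N f ^+ k)`_n.
Proof.
move=> f0 hn; rewrite /rentry; case: leqP => hk.
  by rewrite (eqmodXM (eqmodX_refl _) (@tpoly_spow N f k)) // tpolyM // coef_tpoly.
rewrite coefM big1 // => j _; rewrite coef_exp_lt ?mulr0 ?coef0_tpoly //.
by have := ltn_ord j; lia.
Qed.

Lemma coef_comp_tpoly N a (F : {poly K}) m :
  (tpoly N a \Po F)`_m = \sum_(i < N) a i * (F ^+ i)`_m.
Proof.
rewrite /tpoly poly_def rmorph_sum coef_sum; apply: eq_bigr => i _.
by rewrite /= comp_polyZ comp_Xn_poly coefZ.
Qed.

Lemma scompE N a f m : f 0%N = 0 -> (m < N)%N ->
  scomp a f m = (tpoly N a \Po tpoly N f)`_m.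
Proof.
move=> f0 hm; rewrite coef_comp_tpoly /scomp.
rewrite (big_ord_widen N (fun j => a j * spow f j m)) // big_mkcond.
apply: eq_bigr => i _; case: ltnP => hi.
  by rewrite (@tpoly_spow N f i) ?coef_tpoly.
by rewrite coef_exp_lt ?mulr0 ?coef0_tpoly.
Qed.

Lemma is_AseqE N f a : is_Aseq f a ->
  eqmodX N (tpoly N f) ('X * (tpoly N a \Po tpoly N f)).
Proof.
move=> hA; have f0 : f 0%N = 0 by rewrite hA.
move=> [|m] hm; rewrite coef_tpoly // hA coefXM //=.
exact: (@scompE N a f m f0 (ltnW hm)).
Qed.

Lemma is_recipE N a c : is_recip a c -> eqmodX N (tpoly N a * tpoly N c) 1.
Proof. by move=> hR i hi; rewrite tpolyM // coef_tpoly // hR coef1. Qed.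

Lemma rentry_recE N g f b n k : f 0%N = 0 -> (n.+1 < N)%N -> (0 < k)%N ->
  rentry g f n k.-1 + \sum_(j < n.+1) b j * rentry g f (n - j) (k + j)
  = (tpoly N g * tpoly N f ^+ k.-1 * Bfun N b (tpoly N f))`_n.+1.
Proof.
move=> f0 hn hk; set G := tpoly N g; set F := tpoly N f.
have -> : G * F ^+ k.-1 * Bfun N b F =
    'X * (G * F ^+ k.-1) + \sum_(j < N) b j *: ('X ^+ j.+1 * (G * F ^+ (k + j))).
  rewrite /Bfun mulrDr mulr_sumr; congr (_ + _); first by rewrite mulrC.
  apply: eq_bigr => j _; rewrite -scalerAr; congr (_ *: _).
  by rewrite exprMn (_ : (k + j = k.-1 + j.+1)%N) ?exprD; [ring | lia].
rewrite coefD coefXM /= -(rentryE g k.-1 f0) ?coef_sum; last lia.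
congr (_ + _).
rewrite (big_ord_widen N (fun j => b j * rentry g f (n - j) (k + j))); last lia.
rewrite [LHS]big_mkcond /=.
apply: eq_bigr => j _; rewrite coefZ coefXnM !ltnS subSS.
have [_ | jn] := ltnP n j; first by rewrite mulr0.
by rewrite -(rentryE g (k + j) f0) //; lia.
Qed.

Lemma typeI_B_eqmodX g f b : riordan g f ->
  is_typeI_B g f b <-> forall N, eqmodX N (tpoly N f) (Bfun N b (tpoly N f)).
Proof.
move=> [g0 [f0 _]]; split=> [hB [//|N] | hF n k hk].
  have G0 : (tpoly N.+1 g)`_0 != 0 by rewrite coef_tpoly // g0 oner_neq0.
  apply/(eqmodX_mul2l _ _ _ G0) => -[_ | n hn].
    by rewrite !coef0M (coef0_tpoly _ f0) coef0_Bfun.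
  have := hB n 1%N (leqnn 1).
  by rewrite (rentry_recE g b f0 hn) // -(rentryE g 1 f0) // expr0 mulr1.
rewrite (rentry_recE g b f0 (ltnSn n.+1)) // (rentryE g k f0 (ltnSn n.+1)).
rewrite -{1}(prednK hk) exprSr mulrA.
exact: eqmodXM (eqmodX_refl _) (hF n.+2) _ (ltnSn _).
Qed.

Lemma Bfun_fixed_Aseq N g f a c b : riordan g f -> is_Aseq f a -> is_recip a c ->
  eqmodX N (tpoly N f) (Bfun N b (tpoly N f)) <->
  eqmodX N.-1 (tpoly N a) (1 + 'X * Bcomp N b (tpoly N c)).
Proof.
move=> [_ [f0 f1]] hA hR; have [N_small | N_big] := leqP N 1.
  (* the truncation of f has no linear term, but both sides are trivial *)
  case: N N_small => [|[|]] // _; split=> // _ [|] // _.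
  by rewrite coef0_tpoly // coef0_Bfun.
apply: Bfun_fixed_iff; rewrite ?coef0_tpoly ?coef_tpoly //.
  exact: is_AseqE.
exact: is_recipE.
Qed.

Lemma compsumE w ct (P : {poly K}) n m :
  P`_0 = 0 -> (forall j, (0 < j <= n)%N -> P`_j = ct j) ->
  compsum w ct n m = \sum_(k < m) w k.+1 * (P ^+ k.+1)`_n.
Proof.
move=> P0 hP; rewrite /compsum big_add1 /= big_mkord; apply: eq_bigr => k _.
by rewrite (coef_exp_compositions _ P0 hP) mulr_sumr.
Qed.

Lemma compsum_cshiftE N w c n m : (n < N.+2)%N ->
  compsum w (cshift c) n m = \sum_(k < m) w k.+1 * (('X^2 * tpoly N c) ^+ k.+1)`_n.
Proof.
move=> hn; apply: compsumE => [|j hj]; first by rewrite coefXnM.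
rewrite coefXnM /cshift; case: ltnP => // j2.
by rewrite coef_tpoly //; lia.
Qed.

Lemma coef_Bcomp_even N b c l : c 0%N = 1 -> (2 * l < N)%N ->
  (Bcomp N b (tpoly N c))`_(2 * l)%N = b l + compsum b (cshift c) (2 * l) l.-1.
Proof.
move=> c0 hl; rewrite (coef_Bcomp (M := l.+1)) ?big_ord_recr /=; try lia.
rewrite coef_XsqC_exp ltnn subnn coef0_exp coef_tpoly ?c0 ?expr1n ?mulr1; last lia.
rewrite addrC (compsum_cshiftE (N := N)); last lia.
congr (_ + _); case: l hl => [|l] hl; first by rewrite !big_ord0.
by rewrite big_ord_recl expr0 coef1 mulr0 add0r.
Qed.

Lemma coef_Bcomp_odd N b c l : (0 < l)%N -> ((2 * l).-1 < N)%N ->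
  (Bcomp N b (tpoly N c))`_(2 * l).-1 = compsum b (cshift c) (2 * l).-1 l.-1.
Proof.
case: l => [//|l] _; rewrite (_ : (2 * l.+1).-1 = (2 * l).+1)%N /=; last lia.
move=> hl; rewrite (coef_Bcomp (M := l.+1)); try lia.
rewrite big_ord_recl expr0 coef1 mulr0 add0r (compsum_cshiftE (N := N)) //; lia.
Qed.

Lemma Aseq_Bcomp_iff a b c : is_recip a c ->
  (forall N, eqmodX N.-1 (tpoly N a) (1 + 'X * Bcomp N b (tpoly N c))) <->
  [/\ a 0%N = 1,
      forall l, b l = a (2 * l).+1 - compsum b (cshift c) (2 * l) l.-1
    & forall l, (0 < l)%N -> a (2 * l)%N = compsum b (cshift c) (2 * l).-1 l.-1].
Proof.
move=> hR; have c0 : a 0%N = 1 -> c 0%N = 1.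
  by move=> a0; have := hR 0%N; rewrite /smul big_ord1 a0 mul1r.
have coef1X (p : {poly K}) m : (1 + 'X * p)`_m.+1 = p`_m.
  by rewrite coefD coef1 coefXM add0r.
split=> [h | [a0 hb ha] N [|j] hj].
- have a0 : a 0%N = 1.
    by have := h 2%N 0%N isT; rewrite coef_tpoly // coefD coef1 coefXM addr0.
  have hS N j : (j.+1 < N.-1)%N -> a j.+1 = (Bcomp N b (tpoly N c))`_j.
    by move=> hj; rewrite -coef1X -h // coef_tpoly //; lia.
  split=> // [l | l l0].
    by rewrite (hS (2 * l).+3) // coef_Bcomp_even ?(c0 a0) ?addrK //; lia.
  have := hS (2 * l).+2 (2 * l).-1; rewrite prednK ?coef_Bcomp_odd //; try lia.
  by apply; lia.
- by rewrite coef_tpoly ?coefD ?coef1 ?coefXM ?addr0 //; lia.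
have [[l jE] | [l jE]] : (exists l, j = 2 * l)%N \/ (exists l, j = (2 * l).+1).
  by case/boolP: (odd j) => oj; [right | left]; exists j./2; lia.
  by rewrite jE coef_tpoly ?coef1X ?coef_Bcomp_even ?(c0 a0) ?(hb l) ?subrK //; lia.
rewrite jE coef_tpoly ?coef1X; last lia.
have -> : (2 * l).+2 = (2 * l.+1)%N by lia.
have -> : (2 * l).+1 = (2 * l.+1).-1 by lia.
by rewrite ha ?coef_Bcomp_odd //; lia.
Qed.

End RiordanTypeIB.

Theorem theorem2p3 (K : numFieldType) (g f a c b : nat -> K) :
  riordan g f -> is_Aseq f a -> is_recip a c ->
  (is_typeI_B g f b <->
   [/\ a 0%N = 1, a 2%N = 0,
       (forall l : nat,
          b l = a (2 * l).+1 - compsum b (cshift c) (2 * l) l.-1)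
     & (forall l : nat, (2 <= l)%N ->
          a (2 * l)%N = compsum b (cshift c) (2 * l).-1 l.-1)]).
Proof.
move=> hr hA hR; apply: iff_trans (typeI_B_eqmodX b hr) _.
have fixed_iff : (forall N, eqmodX N (tpoly N f) (Bfun N b (tpoly N f))) <->
    (forall N, eqmodX N.-1 (tpoly N a) (1 + 'X * Bcomp N b (tpoly N c))).
  by split=> h N; apply/(Bfun_fixed_Aseq N b hr hA hR).
apply: iff_trans fixed_iff _; apply: iff_trans (Aseq_Bcomp_iff b hR) _.
split=> [[a0 hb ha] | [a0 a2 hb ha]]; split=> //.
- by rewrite (ha 1%N) // /compsum big_geq.
- by move=> l l2; apply: ha; lia.
- by case=> [|[|l]] // _; [rewrite a2 /compsum big_geq | apply: ha].
Qed.
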